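(* Let $A$ be a monoid and let $0\to M\xrightarrow{i}N\xrightarrow{j}P\to0$ be an admissible short exact sequence of $A$-sets with $P$ projective. Then the sequence splits; more precisely, it is isomorphic to the canonical short exact sequence $0\to M\to M\vee P\to P\to0$.
   Context: A monoid is a commutative multiplicative semigroup with $1$ and absorbing $0$. An $A$-set is a pointed set $(M,\ast)$ with an action satisfying $(ab).m=a.(b.m)$, $a.\ast=\ast$, $0.m=\ast$, $1.m=m$; morphisms are equivariant maps; $0$ denotes the one-point $A$-set. The kernel of $f:M\to N$ is $f^{-1}(\ast)$ and its image is $f(M)$; a sequence $M_1\to M_2\to M_3$ is exact at $M_2$ if the kernel of the second map equals the image of the first, and a short exact sequence $0\to M_1\to M_2\to M_3\to0$ is exact at each of $M_1,M_2,M_3$. A morphism is normal if each fibre over a non-base point has at most one element; a short exact sequence is admissible if all its morphisms are normal. $M\vee P$ is the wedge sum (disjoint union with base points identified), and the canonical sequence uses the inclusion of $M$ and the map collapsing $M$ to the base point. A projective $A$-set is a projective object of the category of $A$-sets. *)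

From Stdlib Require Import ProofIrrelevance.
Set Implicit Arguments.
Unset Strict Implicit.

Record monoid := Monoid {
  mcar :> Type;
  mmul : mcar -> mcar -> mcar;
  mone : mcar;
  mzero : mcar;
  mmulA : forall a b c, mmul a (mmul b c) = mmul (mmul a b) c;
  mmulC : forall a b, mmul a b = mmul b a;
  mmul1 : forall a, mmul mone a = a;
  mmul0 : forall a, mmul mzero a = mzero }.

Record aset (A : monoid) := ASet {
  scar :> Type;
  sbase : scar;
  sact : mcar A -> scar -> scar;
  sactM : forall a b m, sact (@mmul A a b) m = sact a (sact b m);
  sact_base : forall a, sact a sbase = sbase;
  sact0 : forall m, sact (@mzero A) m = sbase;
  sact1 : forall m, sact (@mone A) m = m }.

Arguments sbase {A} a0.
Arguments sact {A} a0 _ _.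

Record ahom (A : monoid) (M N : aset A) := AHom {
  hfun :> M -> N;
  hfunA : forall a m, hfun (sact M a m) = sact N a (hfun m) }.

Definition zero_aset (A : monoid) : aset A :=
  @ASet A unit tt (fun _ _ => tt) (fun _ _ _ => eq_refl) (fun _ => eq_refl)
        (fun m => match m with tt => eq_refl end)
        (fun m => match m with tt => eq_refl end).

Definition from_zero (A : monoid) (M : aset A) : ahom (zero_aset A) M.
Proof. refine (@AHom A (zero_aset A) M (fun _ => sbase M) _).
  intros a m; simpl; symmetry; apply sact_base. Defined.

Definition to_zero (A : monoid) (M : aset A) : ahom M (zero_aset A) :=
  @AHom A M (zero_aset A) (fun _ => tt) (fun _ _ => eq_refl).

Definition exact_at (A : monoid) (X Y Z : aset A) (f : ahom X Y) (g : ahom Y Z) :=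
  forall y : Y, g y = sbase Z <-> exists x : X, f x = y.

Definition short_exact (A : monoid) (M N P : aset A) (i : ahom M N) (j : ahom N P) :=
  exact_at (from_zero M) i /\ exact_at i j /\ exact_at j (to_zero P).

Definition normal (A : monoid) (X Y : aset A) (f : ahom X Y) :=
  forall y : Y, y <> sbase Y -> forall x x' : X, f x = y -> f x' = y -> x = x'.

Definition admissible_ses (A : monoid) (M N P : aset A) (i : ahom M N) (j : ahom N P) :=
  short_exact i j /\ normal (from_zero M) /\ normal i /\ normal j /\ normal (to_zero P).

Definition epi (A : monoid) (X Y : aset A) (g : ahom X Y) :=
  forall (Z : aset A) (u v : ahom Y Z), (forall x, u (g x) = v (g x)) -> forall y, u y = v y.

Definition projective (A : monoid) (P : aset A) :=
  forall (X Y : aset A) (g : ahom X Y) (f : ahom P Y),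
    epi g -> exists h : ahom P X, forall p, g (h p) = f p.

Definition is_iso (A : monoid) (X Y : aset A) (f : ahom X Y) :=
  exists g : ahom Y X, (forall x, g (f x) = x) /\ (forall y, f (g y) = y).

(* Wedge sum M \/ P, modelled as the sub-A-set of M x P of pairs having at least one
   coordinate equal to the base point (disjoint union with base points identified). *)
Definition wedge_car (A : monoid) (M P : aset A) :=
  { x : M * P | fst x = sbase M \/ snd x = sbase P }.

Definition wedge_act (A : monoid) (M P : aset A) (a : A) (x : wedge_car M P) :
  wedge_car M P.
Proof.
  destruct x as [[m p] H]. exists (sact M a m, sact P a p).
  simpl in *; destruct H as [H|H]; [left|right]; rewrite H; apply sact_base.
Defined.

Lemma wedge_eq (A : monoid) (M P : aset A) (x y : wedge_car M P) :
  proj1_sig x = proj1_sig y -> x = y.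
Proof.
  destruct x as [x Hx], y as [y Hy]; simpl; intros ->.
  f_equal; apply proof_irrelevance.
Qed.

Definition wedge (A : monoid) (M P : aset A) : aset A.
Proof.
  refine (@ASet A (wedge_car M P)
            (exist _ (sbase M, sbase P) (or_introl eq_refl))
            (@wedge_act A M P) _ _ _ _).
  - intros a b [[m p] H]; apply wedge_eq; simpl; f_equal; apply sactM.
  - intros a; apply wedge_eq; simpl; f_equal; apply sact_base.
  - intros [[m p] H]; apply wedge_eq; simpl; f_equal; apply sact0.
  - intros [[m p] H]; apply wedge_eq; simpl; f_equal; apply sact1.
Defined.

Definition wedge_incl (A : monoid) (M P : aset A) : ahom M (wedge M P).
Proof.
  refine (@AHom A M (wedge M P)
            (fun m => exist _ (m, sbase P) (or_intror eq_refl)) _).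
  intros a m; apply wedge_eq; simpl; f_equal; symmetry; apply sact_base.
Defined.

Definition wedge_coll (A : monoid) (M P : aset A) : ahom (wedge M P) P.
Proof.
  refine (@AHom A (wedge M P) P (fun x => snd (proj1_sig x)) _).
  intros a [[m p] H]; reflexivity.
Defined.

(* Since [j] is surjective it is an epimorphism, so projectivity of [P] lifts the identity
   of [P] to an equivariant section [s] of [j].  Writing [o] for base points, the map
   [M \/ P -> N] sending [(m, o)] to [i m] and [(o, p)] to [s p] is equivariant and
   bijective: normality of [j] makes [s] invert [j] off the base point, while injectivity of
   [i] (exactness at [M] plus normality of [i]) and [ker j = im i] handle the fibre over the
   base point.  Its inverse is the required isomorphism, with identities on [M] and [P]. *)

From Stdlib Require Import ClassicalEpsilon.

Set Implicit Arguments.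
Unset Strict Implicit.

Lemma ahom_base (A : monoid) (X Y : aset A) (f : ahom X Y) : f (sbase X) = sbase Y.
Proof. now rewrite <- (sact0 (sbase X)), hfunA, sact0. Qed.

Definition ahom_id (A : monoid) (X : aset A) : ahom X X :=
  @AHom A X X (fun x => x) (fun _ _ => eq_refl).

Lemma is_iso_id (A : monoid) (X : aset A) : is_iso (ahom_id X).
Proof. now exists (ahom_id X). Qed.

Lemma is_iso_bijective (A : monoid) (X Y : aset A) (f : ahom X Y) :
  (forall x x', f x = f x' -> x = x') -> (forall y, exists x, f x = y) -> is_iso f.
Proof.
  intros f_inj f_surj.
  set (g y := proj1_sig (constructive_indefinite_description _ (f_surj y))).
  assert (gK : forall y, f (g y) = y).
  { intros y; exact (proj2_sig (constructive_indefinite_description _ (f_surj y))). }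
  assert (gA : forall a y, g (sact Y a y) = sact X a (g y)).
  { intros a y; apply f_inj; now rewrite hfunA, !gK. }
  exists (AHom gA); split; [intros x; apply f_inj|]; apply gK.
Qed.

Lemma surjective_epi (A : monoid) (X Y : aset A) (g : ahom X Y) :
  (forall y, exists x, g x = y) -> epi g.
Proof. intros g_surj Z u v uv y; destruct (g_surj y) as [x <-]; apply uv. Qed.

Lemma exact_to_zero_surjective (A : monoid) (N P : aset A) (j : ahom N P) :
  exact_at j (to_zero P) -> forall p, exists n, j n = p.
Proof. intros ex p; now apply ex. Qed.

Lemma exact_from_zero_normal_injective (A : monoid) (M N : aset A) (i : ahom M N) :
  exact_at (from_zero M) i -> normal i -> forall m m', i m = i m' -> m = m'.
Proof.
  intros ex i_normal m m' eq_i.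
  destruct (classic (i m = sbase N)) as [base|nbase].
  - assert (ker_base : forall x, i x = sbase N -> x = sbase M).
    { intros x ix; now destruct (proj1 (ex x) ix) as [[] <-]. }
    rewrite (ker_base m base), (ker_base m'); congruence.
  - exact (i_normal _ nbase m m' eq_refl (eq_sym eq_i)).
Qed.

Lemma projective_section (A : monoid) (N P : aset A) (j : ahom N P) :
  projective P -> (forall p, exists n, j n = p) -> exists s : ahom P N, forall p, j (s p) = p.
Proof.
  intros P_proj j_surj.
  exact (P_proj N P j (ahom_id P) (surjective_epi j_surj)).
Qed.

Lemma normal_section_retract (A : monoid) (N P : aset A) (j : ahom N P) (s : ahom P N) :
  normal j -> (forall p, j (s p) = p) -> forall n, j n <> sbase P -> s (j n) = n.
Proof. intros j_normal sK n nbase; exact (j_normal _ nbase _ _ (sK (j n)) eq_refl). Qed.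

Section WedgeSplitting.

Variables (A : monoid) (M N P : aset A) (i : ahom M N) (j : ahom N P) (s : ahom P N).
Hypotheses (i_inj : forall m m', i m = i m' -> m = m') (ker_j : exact_at i j)
  (sK : forall p, j (s p) = p) (j_normal : normal j).

Let sjK : forall n, j n <> sbase P -> s (j n) = n := normal_section_retract j_normal sK.

Definition wedge_copair_fun (x : wedge M P) : N :=
  if excluded_middle_informative (snd (proj1_sig x) = sbase P)
  then i (fst (proj1_sig x)) else s (snd (proj1_sig x)).

Lemma wedge_copair_funA a x :
  wedge_copair_fun (sact (wedge M P) a x) = sact N a (wedge_copair_fun x).
Proof.
  destruct x as [[m p] mp]; unfold wedge_copair_fun; simpl.
  destruct (excluded_middle_informative (p = sbase P)) as [p_base|p_nbase];
    destruct (excluded_middle_informative (sact P a p = sbase P)) as [ap_base|ap_nbase].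
  - apply hfunA.
  - now rewrite p_base, sact_base in ap_nbase.
  (* The one place where equivariance of [s], i.e. projectivity, is needed. *)
  - destruct mp as [m_base|]; [|contradiction]; simpl in m_base.
    now rewrite m_base, sact_base, ahom_base, <- hfunA, ap_base, ahom_base.
  - apply hfunA.
Qed.

Definition wedge_copair : ahom (wedge M P) N := AHom wedge_copair_funA.

Lemma wedge_copair_incl m : wedge_copair (wedge_incl M P m) = i m.
Proof.
  unfold wedge_copair, wedge_copair_fun; simpl.
  now destruct (excluded_middle_informative (sbase P = sbase P)).
Qed.

Lemma j_wedge_copair x : j (wedge_copair x) = wedge_coll M P x.
Proof.
  destruct x as [[m p] mp]; unfold wedge_copair, wedge_copair_fun; simpl.
  destruct (excluded_middle_informative (p = sbase P)) as [->|]; [|apply sK].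
  apply ker_j; eauto.
Qed.

Lemma wedge_copair_inj x y : wedge_copair x = wedge_copair y -> x = y.
Proof.
  intros eq_xy; pose proof (f_equal j eq_xy) as eq_p; rewrite !j_wedge_copair in eq_p.
  destruct x as [[m p] mp], y as [[m' p'] mp']; simpl in eq_p; subst p'.
  apply wedge_eq; simpl; f_equal.
  unfold wedge_copair, wedge_copair_fun in eq_xy; simpl in eq_xy.
  destruct (excluded_middle_informative (p = sbase P)) as [_|p_nbase]; [now apply i_inj|].
  destruct mp, mp'; simpl in *; congruence.
Qed.

Lemma wedge_copair_surj n : exists x, wedge_copair x = n.
Proof.
  destruct (classic (j n = sbase P)) as [base|nbase].
  - destruct (proj1 (ker_j n) base) as [m <-]; exists (wedge_incl M P m).
    apply wedge_copair_incl.
  - exists (exist _ (sbase M, j n) (or_introl eq_refl)).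
    unfold wedge_copair, wedge_copair_fun; simpl.
    destruct (excluded_middle_informative (j n = sbase P)); [contradiction|now apply sjK].
Qed.

Lemma is_iso_wedge_copair : is_iso wedge_copair.
Proof. exact (is_iso_bijective wedge_copair_inj wedge_copair_surj). Qed.

End WedgeSplitting.

Theorem proposition2p29 (A : monoid) (M N P : aset A) (i : ahom M N) (j : ahom N P) :
  admissible_ses i j -> projective P ->
  exists (alpha : ahom M M) (beta : ahom N (wedge M P)) (gamma : ahom P P),
    is_iso alpha /\ is_iso beta /\ is_iso gamma /\
    (forall m : M, beta (i m) = wedge_incl M P (alpha m)) /\
    (forall n : N, wedge_coll M P (beta n) = gamma (j n)).
Proof.
  intros [[ex_M [ex_N ex_P]] [_ [i_normal [j_normal _]]]] P_proj.
  pose proof (exact_from_zero_normal_injective ex_M i_normal) as i_inj.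
  destruct (projective_section P_proj (exact_to_zero_surjective ex_P)) as [s sK].
  destruct (is_iso_wedge_copair i_inj ex_N sK j_normal) as [beta [betaK copairK]].
  exists (ahom_id M), beta, (ahom_id P).
  split; [apply is_iso_id|]; split; [now exists (wedge_copair i s)|]; split; [apply is_iso_id|].
  split.
  - intros m; now rewrite <- (wedge_copair_incl i s m), betaK.
  - intros n; rewrite <- (j_wedge_copair ex_N sK (beta n)), copairK.
    reflexivity.
Qed.
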